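(* Let $q=(x,y)$ be a solution of the planar Stark problem $\ddot x=-x/r^3+1$, $\ddot y=-y/r^3$ ($r=\sqrt{x^2+y^2}$) with energy $H$ and constant $c$, and let $(\xi(\tau),\eta(\tau))$ be its regularized parabolic coordinates. If $\xi$ and $\eta$ are both periodic functions of $\tau$, with minimal positive periods $T_\xi$ and $T_\eta$ respectively, then $T_\xi>T_\eta$.
   Context: Energy: $H=\frac12(\dot x^2+\dot y^2)-\frac1r-x$. The constant $c$ is the conserved quantity $c=-\dot y(x\dot y-y\dot x)+\frac{x}{r}-\frac12y^2$. Regularized parabolic coordinates: $\xi^2=r+x$, $\eta^2=r-x$, with new time $\tau$ defined by $dt=(\xi^2+\eta^2)\,d\tau$; writing $'=d/d\tau$, they satisfy $\xi'^2=\xi^4+2H\xi^2+2(c+1)$ and $\eta'^2=-\eta^4+2H\eta^2-2(c-1)$, i.e. $\xi''=2\xi^3+2H\xi$, $\eta''=-2\eta^3+2H\eta$. *)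

From Stdlib Require Import Reals.
From Coquelicot Require Import Coquelicot.
Open Scope R_scope.

Definition rad (x y : R) : R := sqrt (x ^ 2 + y ^ 2).

Definition stark_solution (x y : R -> R) : Prop :=
  forall t, 0 < x t ^ 2 + y t ^ 2 ->
    ex_derive x t /\ ex_derive y t /\
    is_derive (Derive x) t (- x t / (rad (x t) (y t)) ^ 3 + 1) /\
    is_derive (Derive y) t (- y t / (rad (x t) (y t)) ^ 3).

Definition stark_energy (x y : R -> R) (t : R) : R :=
  / 2 * (Derive x t ^ 2 + Derive y t ^ 2) - / rad (x t) (y t) - x t.

Definition stark_c (x y : R -> R) (t : R) : R :=
  - Derive y t * (x t * Derive y t - y t * Derive x t)
  + x t / rad (x t) (y t) - y t ^ 2 / 2.

(* (xi, eta) are the regularized parabolic coordinates of the Stark solution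
   (x, y) with energy H and constant c, the new time tau being related to t by
   dt = (xi^2 + eta^2) dtau through the time map tm (t = tm tau).
   xi^2 = r + x, eta^2 = r - x amounts to x = (xi^2 - eta^2)/2 and
   y = xi * eta (sign convention for the square root). *)
Definition regularized_stark (H c : R) (x y xi eta tm : R -> R) : Prop :=
  stark_solution x y /\
  (forall t, 0 < x t ^ 2 + y t ^ 2 ->
     stark_energy x y t = H /\ stark_c x y t = c) /\
  (forall tau,
     is_derive tm tau (xi tau ^ 2 + eta tau ^ 2) /\
     x (tm tau) = (xi tau ^ 2 - eta tau ^ 2) / 2 /\
     y (tm tau) = xi tau * eta tau) /\
  (forall tau,
     ex_derive xi tau /\ ex_derive eta tau /\
     Derive xi tau ^ 2 = xi tau ^ 4 + 2 * H * xi tau ^ 2 + 2 * (c + 1) /\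
     Derive eta tau ^ 2 = - eta tau ^ 4 + 2 * H * eta tau ^ 2 - 2 * (c - 1) /\
     is_derive (Derive xi) tau (2 * xi tau ^ 3 + 2 * H * xi tau) /\
     is_derive (Derive eta) tau (- 2 * eta tau ^ 3 + 2 * H * eta tau)).

Definition min_period (f : R -> R) (T : R) : Prop :=
  0 < T /\ (forall s, f (s + T) = f s) /\
  (forall T', 0 < T' < T -> exists s, f (s + T') <> f s).

(* In the regularized time both parabolic coordinates are one-dimensional
   oscillators, and their periods are compared through polar angles.
   For xi, with xi'^2 = xi^4 + 2 H xi^2 + 2 (c + 1), periodicity forces H < 0,
   xi^4 <= 2 (c + 1) and a zero of xi.  With k = sqrt (-2 H), the point
   (k xi, xi') / sqrt (xi^4 + 2 (c + 1)) moves on the unit circle with angular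
   speed k (2 (c + 1) - xi^4) / (xi^4 + 2 (c + 1)), which lies in [0, k] and
   equals k where xi vanishes; a full period turns it by a positive multiple of
   2 pi, so T_xi >= 2 pi / k.
   For eta, H < 0 gives c < 1 and eta'^2 = (beta - eta^2) (eta^2 + B) with
   beta, B > 0; the point (eta, eta' / sqrt (B + eta^2)) / sqrt beta moves on
   the unit circle with angular speed sqrt (B + eta^2) >= sqrt B, a function of
   the position alone, so eta has a period at most 2 pi / sqrt B.
   Finally B > -2 H = k^2. *)

From Stdlib Require Import Reals Lra.
From Coquelicot Require Import Coquelicot.
Open Scope R_scope.

Lemma is_derive_value_eq (f : R -> R) (x l l' : R) :
  is_derive f x l -> l = l' -> is_derive f x l'.
Proof. now intros Hf <-. Qed.

Lemma is_derive_MVT (f df : R -> R) (a b : R) :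
  (forall x, is_derive f x (df x)) ->
  exists z, f b - f a = df z * (b - a).
Proof.
  intros Hf.
  destruct (MVT_gen f a b df) as [z [_ Hz]]; [intros; apply Hf | | now exists z].
  intros x _. apply continuity_pt_filterlim, (ex_derive_continuous f).
  now exists (df x).
Qed.

Lemma is_derive_0_eq (f : R -> R) (a b : R) :
  (forall x, is_derive f x 0) -> f a = f b.
Proof.
  intros Hf. destruct (is_derive_MVT f (fun _ => 0) a b Hf) as [z Hz]. lra.
Qed.

Lemma is_derive_increment_bounds (f df : R -> R) (m K a b : R) :
  (forall x, is_derive f x (df x)) -> (forall x, m <= df x <= K) -> a <= b ->
  m * (b - a) <= f b - f a <= K * (b - a).
Proof.
  intros Hf Hdf Hab. destruct (is_derive_MVT f df a b Hf) as [z ->].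
  specialize (Hdf z). split; nra.
Qed.

Lemma is_derive_interval_const_0 (f : R -> R) (a b x l : R) :
  (forall t, a <= t <= b -> f t = f a) -> a < x < b -> is_derive f x l -> l = 0.
Proof.
  intros Hconst Hx Hf.
  assert (Hc : is_derive (fun _ => f a) x l).
  { apply (is_derive_ext_loc f); [|exact Hf].
    assert (Hr : 0 < Rmin (x - a) (b - x)) by (apply Rmin_pos; lra).
    exists (mkposreal _ Hr). intros t Ht.
    change (Rabs (t - x) < Rmin (x - a) (b - x)) in Ht.
    apply Rabs_lt_between' in Ht. pose proof (Rmin_l (x - a) (b - x)).
    pose proof (Rmin_r (x - a) (b - x)). apply Hconst. lra. }
  apply is_derive_unique in Hc. now rewrite Derive_const in Hc.
Qed.

Lemma is_derive_RInt_continuous (f : R -> R) (a : R) :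
  (forall x, continuous f x) -> forall t, is_derive (fun t => RInt f a t) t (f t).
Proof.
  intros Hf t. apply (is_derive_RInt f _ a); [|apply Hf].
  apply filter_forall. intro b. apply (RInt_correct f a b), ex_RInt_continuous.
  intros; apply Hf.
Qed.

Lemma Derive_periodic (f : R -> R) (T : R) :
  (forall x, ex_derive f x) -> (forall s, f (s + T) = f s) ->
  forall s, Derive f (s + T) = Derive f s.
Proof.
  intros Hf Hper s.
  assert (Hshift : is_derive (fun x => f (x + T)) s (Derive f (s + T))).
  { auto_derive; [apply Hf | apply Rmult_1_l]. }
  rewrite <- (is_derive_unique _ _ _ Hshift). apply Derive_ext, Hper.
Qed.

Lemma periodic_max (f : R -> R) (T : R) :
  0 < T -> (forall x, continuous f x) -> (forall s, f (s + T) = f s) ->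
  exists tM, forall t, f t <= f tM.
Proof.
  intros HT Hf Hper.
  destruct (continuity_ab_maj f 0 T) as [tM [HM _]];
    [lra | intros; apply continuity_pt_filterlim, Hf |].
  exists tM.
  assert (Hn : forall n : nat, forall t, - INR n * T <= t <= INR n * T + T -> f t <= f tM).
  { induction n as [|n IH]; intros t Ht.
    - apply HM. simpl in Ht. lra.
    - rewrite S_INR in Ht. pose proof (pos_INR n).
      destruct (Rle_dec t (INR n * T + T)); [destruct (Rle_dec (- INR n * T) t)|].
      + apply IH; lra.
      + rewrite <- (Hper t). apply IH. nra.
      + replace t with (t - T + T) by ring. rewrite Hper. apply IH. nra. }
  intro t. destruct (INR_archimed T (Rabs t) HT) as [n Hn'].
  apply (Hn n). split_Rabs; nra.
Qed.

Lemma periodic_min (f : R -> R) (T : R) :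
  0 < T -> (forall x, continuous f x) -> (forall s, f (s + T) = f s) ->
  exists tm, forall t, f tm <= f t.
Proof.
  intros HT Hf Hper.
  destruct (periodic_max (fun x => - f x) T HT) as [tm Htm].
  - intro x. apply (continuous_opp f), Hf.
  - intro s. now rewrite Hper.
  - exists tm. intro t. specialize (Htm t). lra.
Qed.

Lemma Derive_max_0 (f : R -> R) (tM : R) :
  ex_derive f tM -> (forall t, f t <= f tM) -> Derive f tM = 0.
Proof.
  intros Hf HM. rewrite <- (Derive_Reals f tM (ex_derive_Reals_0 f tM Hf)).
  apply (deriv_maximum f (tM - 1) (tM + 1)); [lra | lra | intros; apply HM].
Qed.

Lemma Derive_min_0 (f : R -> R) (tm : R) :
  ex_derive f tm -> (forall t, f tm <= f t) -> Derive f tm = 0.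
Proof.
  intros Hf Hm.
  assert (Hopp : Derive (fun x => - f x) tm = 0).
  { apply Derive_max_0; [exact (ex_derive_opp f tm Hf)| intro t; specialize (Hm t); lra]. }
  rewrite Derive_opp in Hopp. lra.
Qed.

Lemma min_period_nonconstant (f : R -> R) (T : R) :
  min_period f T -> exists s t, f s <> f t.
Proof.
  intros [HT [_ Hmin]]. destruct (Hmin (T / 2)) as [s Hs]; [lra|].
  now exists (s + T / 2), s.
Qed.

Lemma cos_eq_1_2PI_0 (x : R) : 0 <= x < 2 * PI -> cos x = 1 -> x = 0.
Proof.
  intros Hx Hcos. destruct (Req_dec x 0) as [|Hx0]; [assumption|exfalso].
  assert (Hsin : 0 < sin (x / 2)) by (apply sin_gt_0; lra).
  replace x with (2 * (x / 2)) in Hcos by field. rewrite cos_2a_sin in Hcos. nra.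
Qed.

Lemma rotation_formula (s p w th : R -> R) (t0 : R) :
  (forall t, is_derive s t (w t * p t)) ->
  (forall t, is_derive p t (- w t * s t)) ->
  (forall t, is_derive th t (w t)) ->
  forall t, s t = s t0 * cos (th t - th t0) + p t0 * sin (th t - th t0) /\
            p t = p t0 * cos (th t - th t0) - s t0 * sin (th t - th t0).
Proof.
  intros Hs Hp Hth.
  set (E := fun t => (s t - (s t0 * cos (th t - th t0) + p t0 * sin (th t - th t0))) ^ 2
    + (p t - (p t0 * cos (th t - th t0) - s t0 * sin (th t - th t0))) ^ 2).
  assert (HE : forall t, is_derive E t 0).
  { intro t. unfold E. auto_derive.
    - repeat split; first [exists (w t * p t); apply Hs | exists (w t); apply Hth
                         | exists (- w t * s t); apply Hp].
    - replace (Derive (fun x : R => s x) t) with (w t * p t)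
        by (symmetry; apply is_derive_unique, Hs).
      replace (Derive (fun x : R => p x) t) with (- w t * s t)
        by (symmetry; apply is_derive_unique, Hp).
      replace (Derive (fun x : R => th x) t) with (w t)
        by (symmetry; apply is_derive_unique, Hth).
      ring. }
  intro t. assert (HEt : E t = E t0) by (apply is_derive_0_eq, HE).
  unfold E in HEt. rewrite Rminus_diag, cos_0, sin_0 in HEt.
  set (u := s t - _) in HEt. set (v := p t - _) in HEt.
  assert (Hu : u = 0) by nra. assert (Hv : v = 0) by nra.
  unfold u, v in *. split; lra.
Qed.

Lemma rotation_period_ge (s p w : R -> R) (k T : R) :
  (forall t, is_derive s t (w t * p t)) ->
  (forall t, is_derive p t (- w t * s t)) ->
  (forall t, continuous w t) -> (forall t, 0 <= w t <= k) ->
  (forall t, s t ^ 2 + p t ^ 2 = 1) ->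
  0 < T -> (forall t, s (t + T) = s t) -> (forall t, p (t + T) = p t) ->
  (exists t0, 0 < w t0) -> 2 * PI / k <= T.
Proof.
  intros Hs Hp Hw Hwk Hnorm HT Hsper Hpper [t0 Ht0].
  (* The angle D turned over one period has cos D = 1 and lies in [0, k T]; it is
     not 0 because the angle strictly increases near t0. *)
  assert (Hk : 0 < k) by (specialize (Hwk t0); lra).
  set (a := t0 - T / 2).
  set (th := fun t => RInt w a t).
  assert (Hth : forall t, is_derive th t (w t)) by (apply is_derive_RInt_continuous, Hw).
  set (D := th (a + T) - th a).
  assert (HcosD : cos D = 1).
  { destruct (rotation_formula s p w th a Hs Hp Hth (a + T)) as [E1 E2].
    rewrite Hsper in E1. rewrite Hpper in E2. fold D in E1, E2.
    assert (Hc : (cos D - 1) * (s a ^ 2 + p a ^ 2)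
      = s a * (s a * cos D + p a * sin D - s a) + p a * (p a * cos D - s a * sin D - p a))
      by ring.
    rewrite <- E1, <- E2, Hnorm in Hc. lra. }
  destruct (Rle_lt_dec (2 * PI / k) T) as [|HkT]; [assumption | exfalso].
  apply (Rmult_lt_compat_l k) in HkT; [|exact Hk].
  replace (k * (2 * PI / k)) with (2 * PI) in HkT by (field; lra).
  assert (Hincr : forall t1 t2, t1 <= t2 -> 0 <= th t2 - th t1 <= k * (t2 - t1)).
  { intros t1 t2 Ht. pose proof (is_derive_increment_bounds th w 0 k t1 t2 Hth Hwk Ht).
    now rewrite Rmult_0_l in *. }
  assert (HD0 : D = 0).
  { apply cos_eq_1_2PI_0; [|exact HcosD].
    pose proof (Hincr a (a + T) ltac:(lra)). replace (a + T - a) with T in * by ring.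
    unfold D. lra. }
  assert (Hconst : forall t, a <= t <= a + T -> th t = th a).
  { intros t Ht. pose proof (Hincr a t (proj1 Ht)). pose proof (Hincr t (a + T) (proj2 Ht)).
    unfold D in HD0. lra. }
  pose proof (is_derive_interval_const_0 th a (a + T) t0 (w t0) Hconst ltac:(unfold a; lra) (Hth t0)).
  lra.
Qed.

Lemma angle_shift_periodic (th g : R -> R) (kappa L : R) :
  (forall t, is_derive th t (g (th t))) -> (forall a, continuous g a) ->
  0 < kappa -> (forall a, kappa <= g a) -> 0 < L -> (forall a, g (a + L) = g a) ->
  exists T, 0 < T <= L / kappa /\ forall t, th (t + T) = th t + L.
Proof.
  intros Hth Hg Hk Hgk HL Hper.
  assert (Hgpos : forall a, 0 < g a) by (intro a; specialize (Hgk a); lra).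
  (* G a is the time the angle needs to go from th 0 to a, so G (th t) = t. *)
  set (G := fun a => RInt (fun b => / g b) (th 0) a).
  assert (HG : forall a, is_derive G a (/ g a)).
  { apply is_derive_RInt_continuous. intro a.
    apply continuous_Rinv_comp; [apply Hg | apply Rgt_not_eq, Hgpos]. }
  assert (HG_inj : forall a b, G a = G b -> a = b).
  { intros a b Hab. destruct (is_derive_MVT G _ a b HG) as [z Hz].
    pose proof (Rinv_0_lt_compat _ (Hgpos z)). nra. }
  assert (HG_th : forall t, G (th t) - t = G (th 0) - 0).
  { intro t. apply (is_derive_0_eq (fun x => G (th x) - x)). intro x.
    pose proof (is_derive_minus _ _ x _ _ (is_derive_comp G th x _ _ (HG (th x)) (Hth x))
      (is_derive_id x)) as Hd.
    replace 0 with (g (th x) * / g (th x) - 1) by (field; apply Rgt_not_eq, Hgpos).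
    exact Hd. }
  assert (HG_shift : forall a, G (a + L) - G a = G (th 0 + L) - G (th 0)).
  { intro a. apply (is_derive_0_eq (fun a => G (a + L) - G a)). intro x.
    pose proof (is_derive_minus _ _ x _ _
      (is_derive_comp G (fun a => a + L) x _ _ (HG (x + L))
        (is_derive_plus _ _ x _ _ (is_derive_id x) (is_derive_const L x)))
      (HG x)) as Hd.
    replace 0 with ((1 + 0) * / g (x + L) - / g x) by (rewrite Hper; ring).
    exact Hd. }
  exists (G (th 0 + L) - G (th 0)). split.
  - destruct (is_derive_MVT G _ (th 0) (th 0 + L) HG) as [z ->].
    replace (th 0 + L - th 0) with L by ring.
    pose proof (Rinv_0_lt_compat _ (Hgpos z)).
    assert (Hgz : / g z <= / kappa) by (apply Rinv_le_contravar; [exact Hk | apply Hgk]).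
    split; [nra|]. unfold Rdiv. rewrite Rmult_comm. apply Rmult_le_compat_l; lra.
  - intro t. apply HG_inj.
    pose proof (HG_th t). pose proof (HG_th (t + (G (th 0 + L) - G (th 0)))).
    pose proof (HG_shift (th t)). lra.
Qed.

Lemma rotation_periodic (s p phi : R -> R) (kappa : R) :
  (forall t, is_derive s t (phi (s t) * p t)) ->
  (forall t, is_derive p t (- phi (s t) * s t)) ->
  (forall u, continuous phi u) -> 0 < kappa -> (forall u, kappa <= phi u) ->
  exists T, 0 < T <= 2 * PI / kappa /\ forall t, s (t + T) = s t.
Proof.
  intros Hs Hp Hphi Hk Hphik.
  set (w := fun t => phi (s t)).
  assert (Hw : forall t, continuous w t).
  { intro t. apply (continuous_comp s phi); [|apply Hphi].
    apply (ex_derive_continuous s). eexists; apply Hs. }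
  set (th := fun t => RInt w 0 t).
  assert (Hth : forall t, is_derive th t (w t)) by (apply is_derive_RInt_continuous, Hw).
  assert (Hrot : forall t, s t = s 0 * cos (th t - th 0) + p 0 * sin (th t - th 0))
    by (intro t; apply (rotation_formula s p w th 0 Hs Hp Hth t)).
  set (g := fun a => phi (s 0 * cos (a - th 0) + p 0 * sin (a - th 0))).
  assert (Hg : forall a, continuous g a).
  { intro a. apply (continuous_comp _ phi); [|apply Hphi].
    apply (ex_derive_continuous (fun a => s 0 * cos (a - th 0) + p 0 * sin (a - th 0))).
    auto_derive. exact I. }
  assert (Hg_per : forall a, g (a + 2 * PI) = g a).
  { intro a. unfold g. replace (a + 2 * PI - th 0) with (a - th 0 + 2 * PI) by ring.
    rewrite cos_plus, sin_plus, cos_2PI, sin_2PI. f_equal. ring. }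
  assert (Hth_g : forall t, is_derive th t (g (th t))).
  { intro t. unfold g. rewrite <- Hrot. apply Hth. }
  destruct (angle_shift_periodic th g kappa (2 * PI) Hth_g Hg Hk (fun a => Hphik _)
      ltac:(pose proof PI_RGT_0; lra) Hg_per)
    as [T [HT Hth_per]].
  exists T. split; [exact HT|]. intro t.
  rewrite (Hrot (t + T)), (Hrot t), Hth_per.
  replace (th t + 2 * PI - th 0) with (th t - th 0 + 2 * PI) by ring.
  rewrite cos_plus, sin_plus, cos_2PI, sin_2PI. ring.
Qed.

Lemma quadratic_neg_between (b c v1 v2 v : R) :
  v1 ^ 2 + b * v1 + c = 0 -> v2 ^ 2 + b * v2 + c = 0 -> v1 < v < v2 ->
  v ^ 2 + b * v + c < 0.
Proof.
  intros H1 H2 Hv.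
  assert (Hb : b = - (v1 + v2)).
  { assert (Hf : (v2 - v1) * (v1 + v2 + b) = 0) by nra.
    apply Rmult_integral in Hf as [|]; lra. }
  assert (Hc : c = v1 * v2) by (subst b; nra).
  subst b c. nra.
Qed.

Lemma quadratic_other_root_ge (b c V : R) :
  0 < V -> V ^ 2 + b * V + c = 0 -> (forall v, 0 <= v <= V -> 0 <= v ^ 2 + b * v + c) ->
  V <= - b - V.
Proof.
  intros HV Hroot Hnonneg. set (V' := - b - V).
  assert (Hroot' : V' ^ 2 + b * V' + c = 0) by (unfold V'; nra).
  destruct (Rle_lt_dec V V') as [|Hlt]; [assumption | exfalso].
  assert (Hmax : Rmax V' 0 < V) by (apply Rmax_lub_lt; lra).
  pose proof (Rmax_l V' 0). pose proof (Rmax_r V' 0).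
  set (v := (Rmax V' 0 + V) / 2).
  pose proof (quadratic_neg_between b c V' V v Hroot' Hroot ltac:(unfold v; lra)).
  pose proof (Hnonneg v ltac:(unfold v; lra)). lra.
Qed.

Lemma quartic_roots_opposite (H C m M : R) :
  m < M -> m ^ 4 + 2 * H * m ^ 2 + C = 0 -> M ^ 4 + 2 * H * M ^ 2 + C = 0 ->
  (forall u, m <= u <= M -> 0 <= u ^ 4 + 2 * H * u ^ 2 + C) -> m = - M.
Proof.
  intros Hlt Hm HM Hnonneg.
  assert (Hsq : forall u, u ^ 4 + 2 * H * u ^ 2 + C = (u ^ 2) ^ 2 + 2 * H * u ^ 2 + C)
    by (intro; ring).
  rewrite Hsq in Hm, HM.
  enough (HmM : m ^ 2 = M ^ 2) by nra.
  destruct (Rtotal_order (m ^ 2) (M ^ 2)) as [Hlt2 | [| Hgt2]]; [exfalso | assumption | exfalso].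
  - assert (HM0 : 0 < M) by nra. set (u := (Rabs m + M) / 2).
    assert (Hu : Rabs m < u < M) by (unfold u; split_Rabs; nra).
    assert (Hu2 : m ^ 2 < u ^ 2 < M ^ 2)
      by (rewrite <- (pow2_abs m); pose proof (Rabs_pos m); nra).
    pose proof (quadratic_neg_between _ _ _ _ _ Hm HM Hu2).
    pose proof (Hnonneg u ltac:(split_Rabs; lra)). rewrite Hsq in *. lra.
  - assert (Hm0 : m < 0) by nra. set (u := (m - Rabs M) / 2).
    assert (Hu : m < u < - Rabs M) by (unfold u; split_Rabs; nra).
    assert (Hu2 : M ^ 2 < u ^ 2 < m ^ 2)
      by (rewrite <- (pow2_abs M); pose proof (Rabs_pos M); nra).
    pose proof (quadratic_neg_between _ _ _ _ _ HM Hm Hu2).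
    pose proof (Hnonneg u ltac:(split_Rabs; lra)). rewrite Hsq in *. lra.
Qed.

Lemma quartic_oscillation_range (H C m M : R) :
  m < M -> m ^ 4 + 2 * H * m ^ 2 + C = 0 -> M ^ 4 + 2 * H * M ^ 2 + C = 0 ->
  (forall u, m <= u <= M -> 0 <= u ^ 4 + 2 * H * u ^ 2 + C) ->
  H < 0 /\ 0 < C /\ m < 0 < M /\ forall u, m <= u <= M -> u ^ 4 <= C.
Proof.
  intros Hlt Hm HM Hnonneg.
  pose proof (quartic_roots_opposite H C m M Hlt Hm HM Hnonneg) as Hm_opp.
  assert (HM0 : 0 < M) by lra.
  assert (Hroot_ge : M ^ 2 <= - (2 * H) - M ^ 2).
  { apply (quadratic_other_root_ge _ C); [nra | rewrite <- HM; ring |].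
    intros v Hv. rewrite <- (pow2_sqrt v) by lra.
    replace ((sqrt v ^ 2) ^ 2) with (sqrt v ^ 4) by ring. apply Hnonneg.
    pose proof (sqrt_pos v). split; [lra|].
    rewrite <- (sqrt_pow2 M) by lra. apply sqrt_le_1_alt. lra. }
  assert (HM2 : 0 < M ^ 2) by nra.
  assert (HC : M ^ 4 <= C).
  { replace (M ^ 4) with (M ^ 2 * M ^ 2) by ring.
    replace C with (M ^ 2 * (- (2 * H) - M ^ 2)) by nra.
    apply Rmult_le_compat_l; lra. }
  repeat split; [lra | nra | lra | lra |].
  intros u Hu. assert (Hu2 : u ^ 2 <= M ^ 2) by nra.
  replace (u ^ 4) with (u ^ 2 * u ^ 2) by ring. pose proof (pow2_ge_0 u). nra.
Qed.

Section Xi.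

Variables (H c : R) (xi : R -> R).
Hypothesis xi_derivable : forall t, ex_derive xi t.
Hypothesis xi_first_integral :
  forall t, Derive xi t ^ 2 = xi t ^ 4 + 2 * H * xi t ^ 2 + 2 * (c + 1).
Hypothesis xi_second_derivative :
  forall t, is_derive (Derive xi) t (2 * xi t ^ 3 + 2 * H * xi t).

Lemma xi_oscillation_range (T : R) : min_period xi T ->
  H < 0 /\ 0 < c + 1 /\ (forall t, xi t ^ 4 <= 2 * (c + 1)) /\ exists t0, xi t0 = 0.
Proof.
  intros Hmin. destruct (min_period_nonconstant xi T Hmin) as [s1 [s2 Hs]].
  destruct Hmin as [HT [Hper _]].
  assert (Hcont : forall t, continuous xi t)
    by (intro; apply (ex_derive_continuous xi), xi_derivable).
  destruct (periodic_max xi T HT Hcont Hper) as [tM HM].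
  destruct (periodic_min xi T HT Hcont Hper) as [tm Hm].
  assert (Hlt : xi tm < xi tM).
  { destruct (Rlt_le_dec (xi tm) (xi tM)) as [|Hge]; [assumption | exfalso].
    apply Hs. pose proof (HM s1). pose proof (HM s2). pose proof (Hm s1). pose proof (Hm s2).
    lra. }
  assert (Hrange : forall u, xi tm <= u <= xi tM -> exists t, xi t = u).
  { intros u Hu.
    destruct (IVT_gen xi tm tM u) as [t [_ Ht]]; [|rewrite Rmin_left, Rmax_right; lra|].
    - intro x. apply continuity_pt_filterlim, Hcont.
    - now exists t. }
  assert (Hroot : forall t0, Derive xi t0 = 0 ->
    xi t0 ^ 4 + 2 * H * xi t0 ^ 2 + 2 * (c + 1) = 0).
  { intros t0 Ht0. rewrite <- xi_first_integral, Ht0. ring. }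
  destruct (quartic_oscillation_range H (2 * (c + 1)) (xi tm) (xi tM))
    as [HH [Hc [Hsign Hbound]]].
  - exact Hlt.
  - apply Hroot, Derive_min_0; [apply xi_derivable | exact Hm].
  - apply Hroot, Derive_max_0; [apply xi_derivable | exact HM].
  - intros u Hu. destruct (Hrange u Hu) as [t <-].
    rewrite <- xi_first_integral. apply pow2_ge_0.
  - repeat split; [exact HH | lra | |].
    + intro t. apply Hbound. split; [apply Hm | apply HM].
    + apply Hrange. lra.
Qed.

Section XiCircle.

Hypotheses (H_neg : H < 0) (c_pos : 0 < c + 1).

Definition xi_weight (t : R) : R := sqrt (xi t ^ 4 + 2 * (c + 1)).
Definition xi_circle_s (t : R) : R := sqrt (- 2 * H) * xi t / xi_weight t.
Definition xi_circle_p (t : R) : R := Derive xi t / xi_weight t.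
Definition xi_angular_speed (t : R) : R :=
  sqrt (- 2 * H) * (2 * (c + 1) - xi t ^ 4) / (xi t ^ 4 + 2 * (c + 1)).

Lemma xi_quartic_pos (t : R) : 0 < xi t ^ 4 + 2 * (c + 1).
Proof.
  replace (xi t ^ 4) with ((xi t ^ 2) ^ 2) by ring. pose proof (pow2_ge_0 (xi t ^ 2)). lra.
Qed.

Lemma xi_weight_pos (t : R) : 0 < xi_weight t.
Proof. apply sqrt_lt_R0, xi_quartic_pos. Qed.

Lemma xi_weight_sqr (t : R) : xi_weight t * xi_weight t = xi t ^ 4 + 2 * (c + 1).
Proof. apply sqrt_sqrt, Rlt_le, xi_quartic_pos. Qed.

Lemma sqrt_neg_2H_sqr : sqrt (- 2 * H) * sqrt (- 2 * H) = - 2 * H.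
Proof. apply sqrt_sqrt. lra. Qed.

Lemma xi_weight_derive (t : R) :
  is_derive xi_weight t (2 * xi t ^ 3 * Derive xi t / xi_weight t).
Proof.
  pose proof (xi_quartic_pos t). pose proof (xi_weight_pos t). unfold xi_weight in *.
  auto_derive.
  - repeat split; [apply xi_derivable | lra].
  - change (Derive (fun x => xi x) t) with (Derive xi t).
    replace (xi t * (xi t * (xi t * (xi t * 1)))) with (xi t ^ 4) by ring.
    field. lra.
Qed.

Lemma xi_circle_s_derive (t : R) :
  is_derive xi_circle_s t (xi_angular_speed t * xi_circle_p t).
Proof.
  apply (is_derive_value_eq _ _ _ _ (is_derive_div _ _ t _ _
    (is_derive_scal xi t _ _ (Derive_correct xi t (xi_derivable t))) (xi_weight_derive t)
    (Rgt_not_eq _ _ (xi_weight_pos t)))).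
  unfold xi_angular_speed, xi_circle_p. rewrite <- xi_weight_sqr.
  pose proof (xi_weight_pos t). set (W := xi_weight t) in *.
  replace (2 * (c + 1)) with (W * W - xi t ^ 4) by (unfold W; rewrite xi_weight_sqr; ring).
  field. lra.
Qed.

Lemma xi_circle_p_derive (t : R) :
  is_derive xi_circle_p t (- xi_angular_speed t * xi_circle_s t).
Proof.
  apply (is_derive_value_eq _ _ _ _ (is_derive_div _ _ t _ _
    (xi_second_derivative t) (xi_weight_derive t) (Rgt_not_eq _ _ (xi_weight_pos t)))).
  unfold xi_angular_speed, xi_circle_s. rewrite <- xi_weight_sqr.
  pose proof (xi_weight_pos t). pose proof sqrt_neg_2H_sqr.
  assert (HD2 : Derive xi t * Derive xi t
    = xi_weight t * xi_weight t - sqrt (- 2 * H) * sqrt (- 2 * H) * xi t ^ 2).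
  { replace (Derive xi t * Derive xi t) with (Derive xi t ^ 2) by ring.
    rewrite xi_first_integral, xi_weight_sqr, sqrt_neg_2H_sqr. ring. }
  set (W := xi_weight t) in *. set (D := Derive xi t) in *. set (k := sqrt (- 2 * H)) in *.
  replace (D * (2 * xi t ^ 3 * D / W)) with (2 * xi t ^ 3 * (D * D) / W) by (field; lra).
  rewrite HD2. replace H with (- (k * k) / 2) by lra.
  replace (2 * (c + 1)) with (W * W - xi t ^ 4) by (unfold W; rewrite xi_weight_sqr; ring).
  field. lra.
Qed.

Lemma xi_circle_unit (t : R) : xi_circle_s t ^ 2 + xi_circle_p t ^ 2 = 1.
Proof.
  unfold xi_circle_s, xi_circle_p. pose proof (xi_weight_pos t).
  replace ((sqrt (- 2 * H) * xi t / xi_weight t) ^ 2 + (Derive xi t / xi_weight t) ^ 2)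
    with ((sqrt (- 2 * H) * sqrt (- 2 * H) * xi t ^ 2 + Derive xi t ^ 2)
          / (xi_weight t * xi_weight t)) by (field; lra).
  rewrite xi_weight_sqr, xi_first_integral, sqrt_neg_2H_sqr.
  field. apply Rgt_not_eq, xi_quartic_pos.
Qed.

Lemma xi_angular_speed_continuous (t : R) : continuous xi_angular_speed t.
Proof.
  apply (ex_derive_continuous xi_angular_speed). pose proof (xi_quartic_pos t).
  unfold xi_angular_speed. auto_derive.
  repeat split; try apply xi_derivable.
  replace (xi t * (xi t * (xi t * (xi t * 1)))) with (xi t ^ 4) by ring. lra.
Qed.

End XiCircle.

Lemma xi_period_ge (T : R) : min_period xi T -> H < 0 /\ 2 * PI / sqrt (- 2 * H) <= T.
Proof.
  intros Hmin. destruct (xi_oscillation_range T Hmin) as [HH [Hc [Hbound [t0 Ht0]]]].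
  destruct Hmin as [HT [Hper _]].
  split; [exact HH|].
  assert (Hk : 0 < sqrt (- 2 * H)) by (apply sqrt_lt_R0; lra).
  assert (Hspeed : forall t, 0 <= xi_angular_speed t <= sqrt (- 2 * H)).
  { intro t. pose proof (xi_quartic_pos Hc t). specialize (Hbound t).
    unfold xi_angular_speed. split.
    - apply Rmult_le_pos; [nra | apply Rlt_le, Rinv_0_lt_compat; lra].
    - apply Rmult_le_reg_r with (xi t ^ 4 + 2 * (c + 1)); [lra|].
      unfold Rdiv. rewrite Rmult_assoc, Rinv_l by lra. nra. }
  assert (Hspeed0 : 0 < xi_angular_speed t0).
  { unfold xi_angular_speed. rewrite Ht0. replace (0 ^ 4) with 0 by ring.
    replace (sqrt (- 2 * H) * (2 * (c + 1) - 0) / (0 + 2 * (c + 1))) with (sqrt (- 2 * H))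
      by (field; lra).
    exact Hk. }
  assert (Hs_per : forall t, xi_circle_s (t + T) = xi_circle_s t)
    by (intro t; unfold xi_circle_s, xi_weight; now rewrite Hper).
  assert (Hp_per : forall t, xi_circle_p (t + T) = xi_circle_p t).
  { intro t. unfold xi_circle_p, xi_weight.
    now rewrite Hper, (Derive_periodic xi T xi_derivable Hper). }
  exact (rotation_period_ge _ _ _ _ T (xi_circle_s_derive Hc) (xi_circle_p_derive HH Hc)
    (xi_angular_speed_continuous Hc) Hspeed (xi_circle_unit HH Hc) HT Hs_per Hp_per
    (ex_intro _ t0 Hspeed0)).
Qed.

End Xi.

Section Eta.

Variables (H c : R) (eta : R -> R).
Hypothesis eta_derivable : forall t, ex_derive eta t.
Hypothesis eta_first_integral :
  forall t, Derive eta t ^ 2 = - eta t ^ 4 + 2 * H * eta t ^ 2 - 2 * (c - 1).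
Hypothesis eta_second_derivative :
  forall t, is_derive (Derive eta) t (- 2 * eta t ^ 3 + 2 * H * eta t).
Hypothesis H_neg : H < 0.

Lemma eta_c_lt_1 (T : R) : min_period eta T -> c < 1.
Proof.
  intros Hmin. destruct (min_period_nonconstant eta T Hmin) as [s1 [s2 Hs]].
  destruct (Rlt_le_dec c 1) as [|Hc]; [assumption | exfalso].
  assert (Hzero : forall t, eta t = 0).
  { intro t. pose proof (pow2_ge_0 (Derive eta t)). pose proof (pow2_ge_0 (eta t)).
    assert (Hprod : eta t ^ 2 * (eta t ^ 2 - 2 * H) <= 0).
    { replace (eta t ^ 2 * (eta t ^ 2 - 2 * H)) with (- Derive eta t ^ 2 - 2 * (c - 1))
        by (rewrite eta_first_integral; ring).
      lra. }
    assert (Heta2 : eta t ^ 2 <= 0) by nra. nra. }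
  apply Hs. now rewrite !Hzero.
Qed.

Section EtaCircle.

Hypothesis c_lt_1 : c < 1.

Definition eta_beta : R := H + sqrt (H ^ 2 + 2 * (1 - c)).
Definition eta_B : R := - H + sqrt (H ^ 2 + 2 * (1 - c)).

Lemma neg_H_lt_sqrt : - H < sqrt (H ^ 2 + 2 * (1 - c)).
Proof. rewrite <- (sqrt_pow2 (- H)) by lra. apply sqrt_lt_1_alt. nra. Qed.

Lemma eta_beta_pos : 0 < eta_beta.
Proof. pose proof neg_H_lt_sqrt. unfold eta_beta. lra. Qed.

Lemma neg_2H_lt_eta_B : - 2 * H < eta_B.
Proof. pose proof neg_H_lt_sqrt. unfold eta_B. lra. Qed.

Lemma eta_first_integral_factor (t : R) :
  Derive eta t ^ 2 = (eta_beta - eta t ^ 2) * (eta_B + eta t ^ 2).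
Proof.
  assert (Hsqrt : sqrt (H ^ 2 + 2 * (1 - c)) * sqrt (H ^ 2 + 2 * (1 - c)) = H ^ 2 + 2 * (1 - c))
    by (apply sqrt_sqrt; nra).
  rewrite eta_first_integral. unfold eta_beta, eta_B. nra.
Qed.

Definition eta_weight (t : R) : R := sqrt (eta_B + eta t ^ 2).
Definition eta_speed_at (u : R) : R := sqrt (eta_B + eta_beta * u ^ 2).
Definition eta_circle_s (t : R) : R := / sqrt eta_beta * eta t.
Definition eta_circle_p (t : R) : R := Derive eta t / (sqrt eta_beta * eta_weight t).

Lemma eta_B_eta_pos (t : R) : 0 < eta_B + eta t ^ 2.
Proof. pose proof neg_2H_lt_eta_B. pose proof (pow2_ge_0 (eta t)). lra. Qed.

Lemma eta_weight_pos (t : R) : 0 < eta_weight t.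
Proof. apply sqrt_lt_R0, eta_B_eta_pos. Qed.

Lemma eta_weight_sqr (t : R) : eta_weight t * eta_weight t = eta_B + eta t ^ 2.
Proof. apply sqrt_sqrt, Rlt_le, eta_B_eta_pos. Qed.

Lemma eta_weight_derive (t : R) :
  is_derive eta_weight t (eta t * Derive eta t / eta_weight t).
Proof.
  pose proof (eta_B_eta_pos t). pose proof (eta_weight_pos t). unfold eta_weight in *.
  auto_derive.
  - repeat split; [apply eta_derivable|].
    replace (eta t * (eta t * 1)) with (eta t ^ 2) by ring. lra.
  - change (Derive (fun x => eta x) t) with (Derive eta t).
    replace (eta t * (eta t * 1)) with (eta t ^ 2) by ring.
    field. lra.
Qed.

Lemma eta_speed_at_circle_s (t : R) : eta_speed_at (eta_circle_s t) = eta_weight t.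
Proof.
  pose proof eta_beta_pos. unfold eta_speed_at, eta_circle_s, eta_weight. f_equal.
  rewrite <- (sqrt_sqrt eta_beta) at 1 by lra.
  field. apply Rgt_not_eq, sqrt_lt_R0. lra.
Qed.

Lemma eta_circle_s_derive (t : R) :
  is_derive eta_circle_s t (eta_speed_at (eta_circle_s t) * eta_circle_p t).
Proof.
  rewrite eta_speed_at_circle_s.
  apply (is_derive_value_eq _ _ _ _
    (is_derive_scal eta t _ _ (Derive_correct eta t (eta_derivable t)))).
  unfold eta_circle_p. pose proof (eta_weight_pos t). pose proof (sqrt_lt_R0 _ eta_beta_pos).
  field. lra.
Qed.

Lemma eta_circle_p_derive (t : R) :
  is_derive eta_circle_p t (- eta_speed_at (eta_circle_s t) * eta_circle_s t).
Proof.
  rewrite eta_speed_at_circle_s.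
  pose proof (sqrt_lt_R0 _ eta_beta_pos) as Hb. pose proof (eta_weight_pos t) as HW.
  apply (is_derive_value_eq _ _ _ _ (is_derive_div _ _ t _ _
    (eta_second_derivative t) (is_derive_scal _ t (sqrt eta_beta) _ (eta_weight_derive t))
    (Rgt_not_eq _ _ (Rmult_lt_0_compat _ _ Hb HW)))).
  unfold eta_circle_s. pose proof (eta_weight_sqr t) as HWW.
  pose proof (eta_first_integral_factor t) as HD.
  set (b := sqrt eta_beta) in *. set (W := eta_weight t) in *. set (D := Derive eta t) in *.
  replace (D * (b * (eta t * D / W))) with (b * eta t * D ^ 2 / W) by (field; lra).
  rewrite HD. replace H with ((eta_beta - eta_B) / 2) by (unfold eta_beta, eta_B; field).
  replace eta_B with (W * W - eta t ^ 2) by lra.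
  field. lra.
Qed.

Lemma eta_speed_at_continuous (u : R) : continuous eta_speed_at u.
Proof.
  apply (ex_derive_continuous eta_speed_at). pose proof eta_beta_pos.
  pose proof neg_2H_lt_eta_B. pose proof (pow2_ge_0 u).
  unfold eta_speed_at. auto_derive.
  replace (u * (u * 1)) with (u ^ 2) by ring. nra.
Qed.

Lemma eta_speed_at_ge (u : R) : sqrt eta_B <= eta_speed_at u.
Proof.
  apply sqrt_le_1_alt. pose proof eta_beta_pos. pose proof (pow2_ge_0 u). nra.
Qed.

End EtaCircle.

Lemma eta_period_le (T : R) : min_period eta T -> T <= 2 * PI / sqrt eta_B.
Proof.
  intros Hmin. pose proof (eta_c_lt_1 T Hmin) as Hc.
  assert (HB : 0 < sqrt eta_B).
  { apply sqrt_lt_R0. pose proof (neg_2H_lt_eta_B Hc). lra. }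
  destruct (rotation_periodic _ _ _ _ (eta_circle_s_derive Hc) (eta_circle_p_derive Hc)
    (eta_speed_at_continuous Hc) HB (eta_speed_at_ge Hc)) as [T1 [HT1 Hs_per]].
  destruct Hmin as [HT [_ Hmin]].
  destruct (Rle_lt_dec T T1) as [|HT1T]; [lra | exfalso].
  destruct (Hmin T1 ltac:(lra)) as [t Ht]. apply Ht.
  specialize (Hs_per t). unfold eta_circle_s in Hs_per.
  apply (Rmult_eq_reg_l (/ sqrt eta_beta)); [exact Hs_per|].
  apply Rinv_neq_0_compat, Rgt_not_eq, sqrt_lt_R0, (eta_beta_pos Hc).
Qed.

End Eta.

Lemma two_PI_div_sqrt_lt (a b : R) : 0 < a < b -> 2 * PI / sqrt b < 2 * PI / sqrt a.
Proof.
  intros Hab. pose proof PI_RGT_0. unfold Rdiv. apply Rmult_lt_compat_l; [lra|].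
  apply Rinv_lt_contravar; [apply Rmult_lt_0_compat; apply sqrt_lt_R0; lra|].
  apply sqrt_lt_1_alt. lra.
Qed.

Theorem proposition3p1 :
  forall (H c : R) (x y xi eta tm : R -> R) (Txi Teta : R),
    regularized_stark H c x y xi eta tm ->
    min_period xi Txi ->
    min_period eta Teta ->
    Teta < Txi.
Proof.
  intros H c x y xi eta tm Txi Teta [_ [_ [_ Hreg]]] Hxi Heta.
  assert (Hxi_d : forall t, ex_derive xi t) by (intro t; now destruct (Hreg t)).
  assert (Heta_d : forall t, ex_derive eta t) by (intro t; now destruct (Hreg t)).
  assert (Hxi_1 : forall t, Derive xi t ^ 2 = xi t ^ 4 + 2 * H * xi t ^ 2 + 2 * (c + 1))
    by (intro t; now destruct (Hreg t)).
  assert (Heta_1 : forall t, Derive eta t ^ 2 = - eta t ^ 4 + 2 * H * eta t ^ 2 - 2 * (c - 1))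
    by (intro t; now destruct (Hreg t)).
  assert (Hxi_2 : forall t, is_derive (Derive xi) t (2 * xi t ^ 3 + 2 * H * xi t))
    by (intro t; now destruct (Hreg t)).
  assert (Heta_2 : forall t, is_derive (Derive eta) t (- 2 * eta t ^ 3 + 2 * H * eta t))
    by (intro t; now destruct (Hreg t)).
  destruct (xi_period_ge H c xi Hxi_d Hxi_1 Hxi_2 Txi Hxi) as [HH Hxi_T].
  pose proof (eta_c_lt_1 H c eta Heta_1 HH Teta Heta) as Hc.
  pose proof (eta_period_le H c eta Heta_d Heta_1 Heta_2 HH Teta Heta) as Heta_T.
  assert (HB : 0 < - 2 * H < eta_B H c) by (split; [lra | exact (neg_2H_lt_eta_B H c HH Hc)]).
  pose proof (two_PI_div_sqrt_lt _ _ HB). lra.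
Qed.
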